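(* For every Tychonoff space $X$, the following are equivalent: (1) $C_p(X)\models S_{fin}(\Gamma_f,\Gamma_f)$ for every $f\in C_p(X)$; (2) $X\models S_{fin}(\Gamma_F,\Gamma)$; (3) $X\models S_{fin}(\Gamma_{cl},\Gamma_{cl})$ and $X$ is strongly zero-dimensional; (4) $X\models S_1(\Gamma_F,\Gamma)$.
   Context: All spaces are Tychonoff; $C_p(X)$ is $C(X)$ with pointwise convergence topology. For $y$ in a space $Y$: $\Gamma_y=\{A\subseteq Y: A$ infinite, $y\notin A$, every neighbourhood of $y$ contains all but finitely many points of $A\}$. Zero-set: $g^{-1}(0)$, $g\in C(X)$; cozero-set: its complement. A cover $\mathcal U$ of $X$ always means $X=\bigcup\mathcal U$, $X\notin\mathcal U$; $\gamma$-cover: infinite, each point in all but finitely many members. $\Gamma$: open $\gamma$-covers; $\Gamma_{cl}$: clopen $\gamma$-covers. $\Gamma_F$: $\gamma$-covers $\mathcal U$ of $X$ by cozero-sets for which there are zero-sets $F(U)\subseteq U$ ($U\in\mathcal U$) with $\{F(U):U\in\mathcal U\}$ a $\gamma$-cover of $X$. $S_1(\mathcal A,\mathcal B)$: for every sequence $(A_n)$ from $\mathcal A$ there are $b_n\in A_n$ with $\{b_n\}\in\mathcal B$; $S_{fin}(\mathcal A,\mathcal B)$: there are finite $B_n\subseteq A_n$ with $\bigcup_nB_n\in\mathcal B$. *)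

From Stdlib Require Import Reals Lra List Classical.
Open Scope R_scope.
Set Implicit Arguments.
Unset Strict Implicit.

Record Topology (X : Type) := mkTop {
  is_open : (X -> Prop) -> Prop;
  open_all : is_open (fun _ => True);
  open_inter : forall U V, is_open U -> is_open V -> is_open (fun x => U x /\ V x);
  open_union : forall F : (X -> Prop) -> Prop,
      (forall U, F U -> is_open U) -> is_open (fun x => exists U, F U /\ U x)
}.
Arguments is_open {X} t U.

Definition is_closed {X} (T : Topology X) (A : X -> Prop) : Prop :=
  is_open T (fun x => ~ A x).
Definition is_clopen {X} (T : Topology X) (A : X -> Prop) : Prop :=
  is_open T A /\ is_closed T A.

Definition R_open (O : R -> Prop) : Prop :=
  forall r, O r -> exists eps, eps > 0 /\ forall s, Rabs (s - r) < eps -> O s.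

Definition continuous {X} (T : Topology X) (f : X -> R) : Prop :=
  forall O, R_open O -> is_open T (fun x => O (f x)).

Definition T1 {X} (T : Topology X) : Prop :=
  forall x y : X, x <> y -> exists U, is_open T U /\ U y /\ ~ U x.
Definition completely_regular {X} (T : Topology X) : Prop :=
  forall (F : X -> Prop) (x : X), is_closed T F -> ~ F x ->
    exists f : X -> R, continuous T f /\ (forall y, 0 <= f y <= 1) /\
      f x = 0 /\ (forall y, F y -> f y = 1).
Definition Tychonoff {X} (T : Topology X) : Prop := T1 T /\ completely_regular T.

Definition zero_set {X} (T : Topology X) (Z : X -> Prop) : Prop :=
  exists g, continuous T g /\ forall x, Z x <-> g x = 0.
Definition cozero_set {X} (T : Topology X) (U : X -> Prop) : Prop :=
  exists g, continuous T g /\ forall x, U x <-> g x <> 0.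

(** Strong zero-dimensionality (Engelking 6.2.4): any two disjoint zero-sets
    (equivalently, completely separated sets) are separated by a clopen set. *)
Definition strongly_zero_dim {X} (T : Topology X) : Prop :=
  forall Z1 Z2, zero_set T Z1 -> zero_set T Z2 -> (forall x, ~ (Z1 x /\ Z2 x)) ->
    exists C, is_clopen T C /\ (forall x, Z1 x -> C x) /\ (forall x, Z2 x -> ~ C x).

Definition infinite {E : Type} (A : E -> Prop) : Prop :=
  forall l : list E, exists e, A e /\ ~ In e l.

Definition almost_all_in {E : Type} (A : E -> Prop) (U : E -> Prop) : Prop :=
  exists l : list E, forall a, A a -> ~ In a l -> U a.

(** Gamma_y: nontrivial sequences converging to y. *)
Definition Gamma_pt {Y} (T : Topology Y) (y : Y) (A : Y -> Prop) : Prop :=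
  infinite A /\ ~ A y /\
  forall U, is_open T U -> U y -> almost_all_in A U.

Definition family (X : Type) := (X -> Prop) -> Prop.

Definition is_cover {X} (C : family X) : Prop :=
  (forall x, exists U, C U /\ U x) /\ (forall U, C U -> exists x, ~ U x).

Definition gamma_cover {X} (C : family X) : Prop :=
  is_cover C /\ infinite C /\
  forall x : X, almost_all_in C (fun U => U x).

Definition GammaO {X} (T : Topology X) (C : family X) : Prop :=
  gamma_cover C /\ forall U, C U -> is_open T U.

Definition GammaCl {X} (T : Topology X) (C : family X) : Prop :=
  gamma_cover C /\ forall U, C U -> is_clopen T U.

Definition GammaF {X} (T : Topology X) (C : family X) : Prop :=
  gamma_cover C /\ (forall U, C U -> cozero_set T U) /\
  exists F : (X -> Prop) -> (X -> Prop),
    (forall U, C U -> zero_set T (F U) /\ forall x, F U x -> U x) /\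
    gamma_cover (fun V => exists U, C U /\ V = F U).

Definition S1 {E : Type} (A B : (E -> Prop) -> Prop) : Prop :=
  forall s : nat -> (E -> Prop), (forall n, A (s n)) ->
    exists b : nat -> E, (forall n, s n (b n)) /\ B (fun e => exists n, b n = e).

Definition Sfin {E : Type} (A B : (E -> Prop) -> Prop) : Prop :=
  forall s : nat -> (E -> Prop), (forall n, A (s n)) ->
    exists b : nat -> list E, (forall n e, In e (b n) -> s n e) /\
      B (fun e => exists n, In e (b n)).

Unset Implicit Arguments.
Definition CX {X} (T : Topology X) := { f : X -> R | continuous T f }.

Definition Cp_open {X} (T : Topology X) (W : CX T -> Prop) : Prop :=
  forall g, W g -> exists (xs : list X) (eps : R), eps > 0 /\
    forall h : CX T, (forall x, In x xs -> Rabs (proj1_sig h x - proj1_sig g x) < eps) -> W h.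

Lemma Cp_open_all (X : Type) (T : Topology X) : Cp_open T (fun _ => True).
Proof. intros g _. exists nil, 1. split; [lra | auto]. Qed.

Lemma Cp_open_inter (X : Type) (T : Topology X) (U V : CX T -> Prop) :
  Cp_open T U -> Cp_open T V -> Cp_open T (fun x => U x /\ V x).
Proof.
  intros HU HV g [Ug Vg].
  destruct (HU g Ug) as [l1 [e1 [He1 H1]]].
  destruct (HV g Vg) as [l2 [e2 [He2 H2]]].
  exists (l1 ++ l2), (Rmin e1 e2). split.
  - apply Rmin_glb_lt; assumption.
  - intros h Hh. split.
    + apply H1. intros x Hx. eapply Rlt_le_trans.
      apply Hh, in_or_app; auto. apply Rmin_l.
    + apply H2. intros x Hx. eapply Rlt_le_trans.
      apply Hh, in_or_app; auto. apply Rmin_r.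
Qed.

Lemma Cp_open_union (X : Type) (T : Topology X) (F : (CX T -> Prop) -> Prop) :
  (forall U, F U -> Cp_open T U) -> Cp_open T (fun x => exists U, F U /\ U x).
Proof.
  intros HF g [U [FU Ug]].
  destruct (HF U FU g Ug) as [l [e [He H]]].
  exists l, e. split; auto. intros h Hh. exists U. auto.
Qed.

Definition Cp {X} (T : Topology X) : Topology (CX T) :=
  @mkTop (CX T) (Cp_open T) (@Cp_open_all X T) (@Cp_open_inter X T) (@Cp_open_union X T).

(* The core is a diagonal argument: given γ-covers {u n k : k}, apply S_fin to the covers by
   the intersections u 0 k ∩ ... ∩ u n k, removing at stage n the finitely many such sets with
   indices at most n.  The chosen sets then come from later and later stages m >= n, converge
   to the whole space, and lie in u n k, which gives an S_1-selection.  This proves (2) => (4)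
   directly, and (3) => (4) after squeezing clopen sets between F(U) and U.  Clopen γ-covers
   are Γ_F-covers, so (4) gives S_fin(Γ_cl, Γ_cl); and under (4) no continuous f : X -> R takes
   every value in ]0,1[ (otherwise the covers by preimages of bands of the distance from
   (n+1)f to Z would defeat S_1 by nested intervals), so disjoint zero-sets are separated by a
   clopen set {h < t}.  Finally Urysohn functions vanishing on F(U) and equal to 1 exactly off
   U turn Γ_F-covers into sequences of C_p(X) converging to 0, giving (1) => (2); for
   (2) => (1), either cofinitely many of the given sequences have a member uniformly
   1/(n+1)-close to f, or on infinitely many stages the sets {|g - f| < 1/(n+1)} form
   Γ_F-covers to which (2) applies. *)

From Stdlib Require Import Reals List Lra Lia Classical ClassicalEpsilon
  FunctionalExtensionality PropExtensionality ProofIrrelevance FinFun ZArith.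
Open Scope R_scope.

Lemma set_ext {A : Type} (P Q : A -> Prop) : (forall x, P x <-> Q x) -> P = Q.
Proof.
  intros H; apply functional_extensionality; intro x; apply propositional_extensionality; auto.
Qed.

Lemma eventually_forall_in {A : Type} (xs : list A) (P : A -> nat -> Prop) :
  (forall x, exists N, forall n, (N <= n)%nat -> P x n) ->
  exists N, forall n, (N <= n)%nat -> forall x, In x xs -> P x n.
Proof.
  intros H; induction xs as [|a xs [N HN]]; [exists 0%nat; intros n _ x []|].
  destruct (H a) as [Na HNa]. exists (Nat.max Na N); intros n Hn x [<-|Hx].
  - apply HNa; lia.
  - apply HN; auto; lia.
Qed.

Lemma cofinal_increasing_enum (P : nat -> Prop) :
  (forall M, exists n, (M <= n)%nat /\ P n) ->
  exists sg : nat -> nat, (forall j, P (sg j)) /\ forall i j, (i < j)%nat -> (sg i < sg j)%nat.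
Proof.
  intros H. destruct (choice _ H) as [pick Hpick].
  set (sg := fix sg j := match j with O => pick O | S j => pick (S (sg j)) end).
  assert (Hstep : forall j, (sg j < sg (S j))%nat) by (intro j; apply (Hpick (S (sg j)))).
  exists sg. split.
  - intros [|j]; apply Hpick.
  - intros i j Hij; induction Hij as [|j _ IH]; [apply Hstep|].
    specialize (Hstep j); lia.
Qed.

Section Sequences.
Context {E : Type}.

Lemma injective_eventually_notin (w : nat -> E) : Injective w ->
  forall l : list E, exists K, forall k, (K <= k)%nat -> ~ In (w k) l.
Proof.
  intros Hw l; induction l as [|a l [K HK]]; [exists 0%nat; intros k _ []|].
  destruct (classic (exists k0, w k0 = a)) as [[k0 <-]|Hn].
  - exists (Nat.max K (S k0)); intros k Hk [H|H].
    + apply Hw in H; lia.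
    + apply (HK k); [lia|auto].
  - exists K; intros k Hk [H|H]; [apply Hn; eauto | apply (HK k); auto].
Qed.

Lemma infinite_injective_seq (C : E -> Prop) : infinite C ->
  exists w : nat -> E, (forall k, C (w k)) /\ Injective w.
Proof.
  intros Hinf. destruct (choice _ Hinf) as [g Hg].
  set (pre := fix pre n := match n with O => nil | S n => g (pre n) :: pre n end).
  exists (fun n => g (pre n)). split; [intro k; apply Hg|].
  assert (Hin : forall m n, (m < n)%nat -> In (g (pre m)) (pre n)).
  { intros m n Hmn; induction Hmn as [|n _ IH]; [left; auto|right; auto]. }
  intros i j Hij. destruct (Nat.lt_trichotomy i j) as [H|[H|H]]; auto; exfalso.
  - apply (proj2 (Hg (pre j))). rewrite <- Hij. apply Hin; auto.
  - apply (proj2 (Hg (pre i))). rewrite Hij. apply Hin; auto.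
Qed.

Lemma almost_all_in_injective (C P : E -> Prop) (w : nat -> E) :
  almost_all_in C P -> (forall k, C (w k)) -> Injective w ->
  exists K, forall k, (K <= k)%nat -> P (w k).
Proof.
  intros [l Hl] HC Hw. destruct (injective_eventually_notin w Hw l) as [K HK].
  exists K; intros k Hk. apply Hl; auto.
Qed.

Lemma infinite_union_cofinal (b : nat -> list E) :
  infinite (fun e => exists n, In e (b n)) -> forall M, exists n, (M <= n)%nat /\ b n <> nil.
Proof.
  intros Hinf M. apply NNPP; intro Hn.
  destruct (Hinf (flat_map b (seq 0 M))) as [e [[n He] Hne]].
  destruct (Nat.lt_ge_cases n M) as [H|H].
  - apply Hne, in_flat_map. exists n; split; auto. apply in_seq; lia.
  - apply Hn. exists n; split; auto. intros E0; rewrite E0 in He; destruct He.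
Qed.

Lemma infinite_range_new_cofinal (b : nat -> E) :
  infinite (fun e => exists n, b n = e) ->
  forall M, exists n, (M <= n)%nat /\ forall j, (j < n)%nat -> b j <> b n.
Proof.
  intros Hinf M. apply NNPP; intro Hn.
  assert (Hold : forall n, In (b n) (map b (seq 0 M))).
  { intro n. induction n as [n IH] using lt_wf_ind.
    destruct (Nat.lt_ge_cases n M) as [H|H]; [apply in_map, in_seq; lia|].
    destruct (classic (exists j, (j < n)%nat /\ b j = b n)) as [[j [Hj <-]]|Hnew].
    - apply IH; auto.
    - exfalso; apply Hn. exists n; split; auto. intros j Hj E0; apply Hnew; eauto. }
  destruct (Hinf (map b (seq 0 M))) as [e [[n <-] Hne]]. apply Hne, Hold.
Qed.

End Sequences.

(** * γ-covers and γ-sequences *)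

Section GammaCovers.
Context {X : Type}.

Definition gamma_seq (u : nat -> X -> Prop) : Prop :=
  forall x, exists K, forall k, (K <= k)%nat -> u k x.

Definition proper_seq (u : nat -> X -> Prop) : Prop := forall k, exists x, ~ u k x.

Definition range_minus (u : nat -> X -> Prop) (L : list (X -> Prop)) : (X -> Prop) -> Prop :=
  fun V => exists k, u k = V /\ ~ In V L.

Lemma gamma_cover_intro (C : (X -> Prop) -> Prop) :
  (forall U, C U -> exists x, ~ U x) -> infinite C ->
  (forall x, almost_all_in C (fun U => U x)) -> gamma_cover C.
Proof.
  intros H1 H2 H3. split; [split|split]; auto.
  intro x. destruct (H3 x) as [l Hl]. destruct (H2 l) as [e [He Hn]].
  exists e; split; [|apply Hl]; auto.
Qed.

Lemma gamma_seq_eventually_notin (u : nat -> X -> Prop) :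
  proper_seq u -> gamma_seq u ->
  forall l : list (X -> Prop), exists K, forall k, (K <= k)%nat -> ~ In (u k) l.
Proof.
  intros Hne Hg l. induction l as [|V l [K HK]]; [exists 0%nat; intros k _ []|].
  destruct (classic (exists y, ~ V y)) as [[y Hy]|Hn].
  - destruct (Hg y) as [Ky HKy]. exists (Nat.max K Ky); intros k Hk [H|H].
    + apply Hy; rewrite H; apply HKy; lia.
    + apply (HK k); auto; lia.
  - exists K; intros k Hk [H|H].
    + destruct (Hne k) as [x Hx]; apply Hn; exists x; rewrite H; auto.
    + apply (HK k); auto.
Qed.

Lemma gamma_cover_range_minus (u : nat -> X -> Prop) (L : list (X -> Prop)) :
  proper_seq u -> gamma_seq u -> gamma_cover (range_minus u L).
Proof.
  intros Hne Hg. apply gamma_cover_intro.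
  - intros U [k [<- _]]; auto.
  - intro l. destruct (gamma_seq_eventually_notin _ Hne Hg (L ++ l)) as [K HK].
    exists (u K). split.
    + exists K; split; auto. intro H; apply (HK K); auto; apply in_or_app; auto.
    + intro H; apply (HK K); auto; apply in_or_app; auto.
  - intro x. destruct (Hg x) as [K HK]. exists (map u (seq 0 K)).
    intros V [k [<- _]] Hn. apply HK. destruct (Nat.lt_ge_cases k K) as [Hk|Hk]; auto.
    exfalso; apply Hn, in_map, in_seq; lia.
Qed.

Lemma gamma_cover_range (u : nat -> X -> Prop) :
  proper_seq u -> gamma_seq u -> gamma_cover (fun V => exists k, u k = V).
Proof.
  intros Hne Hg. replace (fun V => exists k, u k = V) with (range_minus u nil).
  - apply gamma_cover_range_minus; auto.
  - apply set_ext; intro V; split; [intros [k [H _]]; eauto|intros [k H]; exists k; split; [exact H|intros []]].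
Qed.

Lemma gamma_cover_injective (C : (X -> Prop) -> Prop) (w : nat -> X -> Prop) :
  gamma_cover C -> (forall k, C (w k)) -> Injective w -> gamma_seq w.
Proof.
  intros [_ [_ Hal]] HC Hw x. exact (almost_all_in_injective _ _ _ (Hal x) HC Hw).
Qed.

End GammaCovers.

(** * Continuity and zero-sets *)

Lemma continuity_pt_ball (phi : R -> R) (s0 eps : R) : continuity_pt phi s0 -> eps > 0 ->
  exists del, del > 0 /\ forall s, Rabs (s - s0) < del -> Rabs (phi s - phi s0) < eps.
Proof.
  intros Hc He. destruct (Hc eps He) as [del [Hdel H]]. exists del; split; auto.
  intros s Hs. destruct (Req_dec s s0) as [->|Hne].
  - rewrite Rminus_diag, Rabs_R0; auto.
  - apply (H s); split; [split; [exact I|congruence]|exact Hs].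
Qed.

Lemma nonexpansive_continuity_pt (phi : R -> R) (s0 : R) :
  (forall a b, Rabs (phi a - phi b) <= Rabs (a - b)) -> continuity_pt phi s0.
Proof.
  intros H eps He. exists eps; split; auto. intros s [_ Hs].
  eapply Rle_lt_trans; [apply H|exact Hs].
Qed.

Definition jointly_continuous_at (phi : R -> R -> R) (a0 b0 : R) : Prop :=
  forall eps, eps > 0 -> exists del, del > 0 /\ forall a b,
    Rabs (a - a0) < del -> Rabs (b - b0) < del -> Rabs (phi a b - phi a0 b0) < eps.

Lemma Rplus_jointly_continuous a0 b0 : jointly_continuous_at Rplus a0 b0.
Proof.
  intros e He. exists (e / 2). split; [lra|]. intros a b Ha Hb.
  replace (a + b - (a0 + b0)) with ((a - a0) + (b - b0)) by ring.
  pose proof (Rabs_triang (a - a0) (b - b0)). lra.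
Qed.

Lemma Rmult_jointly_continuous a0 b0 : jointly_continuous_at Rmult a0 b0.
Proof.
  intros e He. set (M := Rabs a0 + Rabs b0 + 1).
  pose proof (Rabs_pos a0) as Ha0; pose proof (Rabs_pos b0) as Hb0.
  assert (HM : M > 0) by (unfold M; lra).
  exists (Rmin 1 (e / M)). split; [apply Rmin_glb_lt; [lra|apply Rdiv_lt_0_compat; auto]|].
  intros a b Ha Hb. pose proof (Rmin_l 1 (e / M)) as Hd1; pose proof (Rmin_r 1 (e / M)) as Hd2.
  replace (a * b - a0 * b0) with (a * (b - b0) + b0 * (a - a0)) by ring.
  eapply Rle_lt_trans; [apply Rabs_triang|]. rewrite !Rabs_mult.
  assert (Ha' : Rabs a <= Rabs a0 + 1).
  { replace a with ((a - a0) + a0) by ring. pose proof (Rabs_triang (a - a0) a0). lra. }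
  assert (H1 : Rabs a * Rabs (b - b0) < (Rabs a0 + 1) * (e / M)).
  { apply Rle_lt_trans with ((Rabs a0 + 1) * Rabs (b - b0)).
    - apply Rmult_le_compat_r; [apply Rabs_pos|lra].
    - apply Rmult_lt_compat_l; lra. }
  assert (H2 : Rabs b0 * Rabs (a - a0) <= Rabs b0 * (e / M)).
  { apply Rmult_le_compat_l; lra. }
  assert (HeM : (Rabs a0 + 1) * (e / M) + Rabs b0 * (e / M) = e) by (unfold M; field; lra).
  lra.
Qed.

Section Continuity.
Context {X : Type} (T : Topology X).

Lemma open_of_local (P : X -> Prop) :
  (forall x, P x -> exists W, is_open T W /\ W x /\ forall y, W y -> P y) -> is_open T P.
Proof.
  intros H. replace P with (fun x => exists W, (is_open T W /\ forall y, W y -> P y) /\ W x).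
  - apply open_union. intros U [HU _]; auto.
  - apply set_ext; intro x; split.
    + intros [W [[_ HW] Wx]]; auto.
    + intros Px. destruct (H x Px) as [W [HW [Wx HWP]]]. exists W; auto.
Qed.

Lemma ball_R_open (c e : R) : R_open (fun r => Rabs (r - c) < e).
Proof.
  intros r Hr. exists (e - Rabs (r - c)). split; [lra|].
  intros s Hs. replace (s - c) with ((s - r) + (r - c)) by ring.
  pose proof (Rabs_triang (s - r) (r - c)). lra.
Qed.

Lemma continuous_const (c : R) : continuous T (fun _ => c).
Proof. intros O HO. apply open_of_local. intros x Ox. exists (fun _ => True). split; [apply open_all|auto]. Qed.

Lemma continuous_comp (g : X -> R) (phi : R -> R) :
  continuous T g -> (forall x, continuity_pt phi (g x)) -> continuous T (fun x => phi (g x)).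
Proof.
  intros Hg Hphi O HO. apply open_of_local. intros x Ox.
  destruct (HO _ Ox) as [e [He HOe]]. destruct (continuity_pt_ball _ _ _ (Hphi x) He) as [d [Hd Hdd]].
  exists (fun y => Rabs (g y - g x) < d). split; [apply (Hg _ (ball_R_open _ _))|].
  split; [rewrite Rminus_diag, Rabs_R0; auto|]. intros y Hy. apply HOe, Hdd, Hy.
Qed.

Lemma continuous_comp2 (g1 g2 : X -> R) (phi : R -> R -> R) :
  continuous T g1 -> continuous T g2 -> (forall x, jointly_continuous_at phi (g1 x) (g2 x)) ->
  continuous T (fun x => phi (g1 x) (g2 x)).
Proof.
  intros Hg1 Hg2 Hphi O HO. apply open_of_local. intros x Ox.
  destruct (HO _ Ox) as [e [He HOe]]. destruct (Hphi x e He) as [d [Hd Hdd]].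
  exists (fun y => Rabs (g1 y - g1 x) < d /\ Rabs (g2 y - g2 x) < d). split.
  { apply open_inter; [apply (Hg1 _ (ball_R_open _ _))|apply (Hg2 _ (ball_R_open _ _))]. }
  split; [rewrite !Rminus_diag, !Rabs_R0; auto|]. intros y [Hy1 Hy2]. apply HOe, Hdd; auto.
Qed.

Lemma continuous_abs (g : X -> R) : continuous T g -> continuous T (fun x => Rabs (g x)).
Proof. intros H. apply continuous_comp; auto. intro; apply Rcontinuity_abs. Qed.

Lemma continuous_plus (g1 g2 : X -> R) :
  continuous T g1 -> continuous T g2 -> continuous T (fun x => g1 x + g2 x).
Proof. intros H1 H2. apply continuous_comp2; auto. intro; apply Rplus_jointly_continuous. Qed.

Lemma continuous_mult (g1 g2 : X -> R) :
  continuous T g1 -> continuous T g2 -> continuous T (fun x => g1 x * g2 x).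
Proof. intros H1 H2. apply continuous_comp2; auto. intro; apply Rmult_jointly_continuous. Qed.

Lemma continuous_minus (g1 g2 : X -> R) :
  continuous T g1 -> continuous T g2 -> continuous T (fun x => g1 x - g2 x).
Proof.
  intros H1 H2. apply (continuous_plus g1 (fun x => - g2 x)); auto.
  apply (continuous_comp g2 Ropp); auto.
  intro x; apply continuity_pt_opp, derivable_continuous_pt, derivable_pt_id.
Qed.

Lemma continuous_inv (g : X -> R) :
  continuous T g -> (forall x, g x <> 0) -> continuous T (fun x => / g x).
Proof.
  intros H Hne. apply (continuous_comp g Rinv); auto.
  intro x; apply (continuity_pt_inv id); [apply derivable_continuous_pt, derivable_pt_id|apply Hne].
Qed.

End Continuity.

Lemma neq_R_open (c : R) : R_open (fun r => r <> c).
Proof.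
  intros r Hr. exists (Rabs (r - c)). split; [apply Rabs_pos_lt; lra|].
  intros s Hs E. subst s. rewrite Rabs_minus_sym in Hs. lra.
Qed.

Lemma Rabs_sum_eq_0 (a b : R) : Rabs a + Rabs b = 0 <-> a = 0 /\ b = 0.
Proof.
  split.
  - unfold Rabs; destruct (Rcase_abs a), (Rcase_abs b); intros; split; lra.
  - intros [-> ->]; rewrite Rabs_R0; ring.
Qed.

Lemma pos_part_eq_0 (r : R) : r + Rabs r = 0 <-> r <= 0.
Proof. unfold Rabs; destruct (Rcase_abs r); split; intros; lra. Qed.

Section ZeroSets.
Context {X : Type} (T : Topology X).

Lemma cozero_set_open (U : X -> Prop) : cozero_set T U -> is_open T U.
Proof.
  intros [g [Hg HU]]. replace U with (fun x => g x <> 0).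
  - apply (Hg _ (neq_R_open 0)).
  - apply set_ext; intro x; rewrite HU; tauto.
Qed.

Lemma zero_set_compl (U : X -> Prop) : cozero_set T U -> zero_set T (fun x => ~ U x).
Proof.
  intros [g [Hg HU]]. exists g; split; auto. intro x; rewrite HU. split; [apply NNPP|tauto].
Qed.

Lemma zero_set_and (Z1 Z2 : X -> Prop) :
  zero_set T Z1 -> zero_set T Z2 -> zero_set T (fun x => Z1 x /\ Z2 x).
Proof.
  intros [g1 [Hg1 H1]] [g2 [Hg2 H2]]. exists (fun x => Rabs (g1 x) + Rabs (g2 x)). split.
  - apply continuous_plus; apply continuous_abs; auto.
  - intro x. rewrite H1, H2, Rabs_sum_eq_0. tauto.
Qed.

Lemma cozero_set_and (U1 U2 : X -> Prop) :
  cozero_set T U1 -> cozero_set T U2 -> cozero_set T (fun x => U1 x /\ U2 x).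
Proof.
  intros [g1 [Hg1 H1]] [g2 [Hg2 H2]]. exists (fun x => g1 x * g2 x). split.
  - apply continuous_mult; auto.
  - intro x. rewrite H1, H2. split.
    + intros [Ha Hb]. apply Rmult_integral_contrapositive_currified; auto.
    + intros H; split; intro E; apply H; rewrite E; ring.
Qed.

Lemma zero_set_le (D E : X -> R) :
  continuous T D -> continuous T E -> zero_set T (fun x => D x <= E x).
Proof.
  intros HD HE. exists (fun x => (D x - E x) + Rabs (D x - E x)). split.
  - apply continuous_plus; [|apply continuous_abs]; apply continuous_minus; auto.
  - intro x. rewrite pos_part_eq_0. lra.
Qed.

Lemma cozero_set_lt (D E : X -> R) :
  continuous T D -> continuous T E -> cozero_set T (fun x => D x < E x).
Proof.
  intros HD HE. destruct (zero_set_le E D HE HD) as [g [Hg Hgz]]. exists g; split; auto.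
  intro x. rewrite <- Hgz. split; [intros H H'; lra|apply Rnot_le_lt].
Qed.

Definition indicator (C : X -> Prop) (x : X) : R :=
  if excluded_middle_informative (C x) then 1 else 0.

Lemma continuous_indicator (C : X -> Prop) : is_clopen T C -> continuous T (indicator C).
Proof.
  intros [HC HnC] O HO. apply open_of_local. intros x Ox. unfold indicator in *.
  destruct (excluded_middle_informative (C x)) as [Cx|nCx].
  - exists C; split; [auto|split; auto]. intros y Cy.
    destruct (excluded_middle_informative (C y)); tauto.
  - exists (fun y => ~ C y); split; [exact HnC|split; auto]. intros y Cy.
    destruct (excluded_middle_informative (C y)); tauto.
Qed.

Lemma clopen_cozero_set (C : X -> Prop) : is_clopen T C -> cozero_set T C.
Proof.
  intros H. exists (indicator C). split; [apply continuous_indicator; auto|].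
  intro x; unfold indicator. destruct (excluded_middle_informative (C x)); split; intros; first [lra|tauto].
Qed.

Lemma clopen_zero_set (C : X -> Prop) : is_clopen T C -> zero_set T C.
Proof.
  intros H. exists (fun x => 1 - indicator C x). split.
  - apply continuous_minus; [apply continuous_const|apply continuous_indicator; auto].
  - intro x; unfold indicator. destruct (excluded_middle_informative (C x)); split; intros; first [lra|tauto].
Qed.

Lemma clopen_and (C1 C2 : X -> Prop) :
  is_clopen T C1 -> is_clopen T C2 -> is_clopen T (fun x => C1 x /\ C2 x).
Proof.
  intros [H1 H1'] [H2 H2']. split; [apply open_inter; auto|].
  apply open_of_local. intros x Hx.
  destruct (classic (C1 x)) as [Hc1|Hc1].
  - exists (fun y => ~ C2 y). tauto.
  - exists (fun y => ~ C1 y). tauto.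
Qed.

Lemma zero_sets_urysohn (Z1 Z2 : X -> Prop) :
  zero_set T Z1 -> zero_set T Z2 -> (forall x, ~ (Z1 x /\ Z2 x)) ->
  exists h, continuous T h /\ forall x, (Z1 x -> h x = 0) /\ (h x = 1 <-> Z2 x).
Proof.
  intros [g1 [Hg1 H1]] [g2 [Hg2 H2]] Hd.
  set (s := fun x => Rabs (g1 x) + Rabs (g2 x)).
  assert (Hs : forall x, s x > 0).
  { intro x. pose proof (Rabs_pos (g1 x)); pose proof (Rabs_pos (g2 x)).
    destruct (Req_dec (s x) 0) as [E|E]; [|unfold s in *; lra].
    exfalso; apply (Hd x). rewrite H1, H2. apply Rabs_sum_eq_0, E. }
  exists (fun x => Rabs (g1 x) * / s x). split.
  - apply continuous_mult; [apply continuous_abs; auto|].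
    apply continuous_inv; [apply continuous_plus; apply continuous_abs; auto|].
    intro x; specialize (Hs x); lra.
  - intro x. specialize (Hs x). unfold s in *. pose proof (Rabs_pos (g2 x)). split.
    + intro Z. rewrite H1 in Z. rewrite Z, Rabs_R0. ring.
    + rewrite H2. split.
      * intro E. destruct (Req_dec (g2 x) 0) as [|Hne]; auto. exfalso.
        pose proof (Rabs_pos_lt _ Hne).
        apply (Rmult_eq_compat_r (Rabs (g1 x) + Rabs (g2 x))) in E.
        rewrite Rmult_assoc, Rinv_l in E by lra. lra.
      * intro E. rewrite E, Rabs_R0, Rplus_0_r in *. field. lra.
Qed.

End ZeroSets.

(** * The diagonal argument *)

Section Diagonal.
Context {X : Type}.

Fixpoint cap_upto (u : nat -> nat -> X -> Prop) (j k : nat) : X -> Prop :=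
  match j with
  | O => u O k
  | S j' => fun x => cap_upto u j' k x /\ u (S j') k x
  end.

Lemma cap_upto_sub (u : nat -> nat -> X -> Prop) i j k x :
  (i <= j)%nat -> cap_upto u j k x -> u i k x.
Proof.
  induction j as [|j IH]; intros Hi H; simpl in H.
  - replace i with 0%nat by lia; auto.
  - destruct (Nat.eq_dec i (S j)) as [->|Hne]; [tauto|]. apply IH; [lia|tauto].
Qed.

Lemma cap_upto_mono (u v : nat -> nat -> X -> Prop) j k x :
  (forall i k x, u i k x -> v i k x) -> cap_upto u j k x -> cap_upto v j k x.
Proof. intros H; induction j; simpl; [apply H|]. intros [A B]; auto. Qed.

Lemma cap_upto_closed (Q : (X -> Prop) -> Prop) (u : nat -> nat -> X -> Prop) j k :
  (forall A B, Q A -> Q B -> Q (fun x => A x /\ B x)) -> (forall i k, Q (u i k)) ->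
  Q (cap_upto u j k).
Proof. intros H1 H2; induction j; simpl; auto. Qed.

Lemma cap_upto_proper (u : nat -> nat -> X -> Prop) j :
  proper_seq (u 0%nat) -> proper_seq (cap_upto u j).
Proof.
  intros Hne k. destruct (Hne k) as [x Hx]. exists x. intro H; apply Hx.
  apply (cap_upto_sub u 0 j k x); auto; lia.
Qed.

Lemma cap_upto_gamma_seq (u : nat -> nat -> X -> Prop) j :
  (forall i, gamma_seq (u i)) -> gamma_seq (cap_upto u j).
Proof.
  intros H x. induction j as [|j [K HK]]; simpl; [apply H|].
  destruct (H (S j) x) as [K' HK']. exists (Nat.max K K'); intros k Hk; split; [apply HK|apply HK']; lia.
Qed.

Lemma Sfin_selection_avoids (d : nat -> nat -> X -> Prop) (L : nat -> list (X -> Prop))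
    (b : nat -> list (X -> Prop)) :
  (forall i k n, (i <= n)%nat -> (k <= n)%nat -> In (d i k) (L n)) ->
  (forall n V, In V (b n) -> range_minus (d n) (L n) V) ->
  forall l, exists N, forall n, (N <= n)%nat -> forall V, In V (b n) -> ~ In V l.
Proof.
  intros HL Hb l. induction l as [|V0 l [N HN]]; [exists 0%nat; intros n _ V _ []|].
  destruct (classic (exists n0, In V0 (b n0))) as [[n0 Hn0]|Hno].
  - destruct (Hb _ _ Hn0) as [k0 [Hk0 _]].
    exists (Nat.max N (Nat.max n0 k0)). intros n Hn V HV [E|E].
    + destruct (Hb _ _ HV) as [k [Hk HkL]]. apply HkL. rewrite <- E, <- Hk0. apply HL; lia.
    + exact (HN n ltac:(lia) V HV E).
  - exists N. intros n Hn V HV [E|E]; [subst V0; apply Hno; eauto|exact (HN n Hn V HV E)].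
Qed.

(* Stage [n] excludes every [d i k] with [i, k <= n], so each set is chosen at only finitely
   many stages. *)
Lemma Sfin_diagonal (A B : ((X -> Prop) -> Prop) -> Prop) (d : nat -> nat -> X -> Prop) :
  Sfin A B -> (forall C, B C -> gamma_cover C) -> (forall n L, A (range_minus (d n) L)) ->
  exists m kk : nat -> nat, (forall n, (n <= m n)%nat) /\ gamma_seq (fun n => d (m n) (kk n)).
Proof.
  intros HS HBg HA.
  set (L := fun n : nat => flat_map (fun i => map (d i) (seq 0 (S n))) (seq 0 (S n))).
  assert (HL : forall i k n, (i <= n)%nat -> (k <= n)%nat -> In (d i k) (L n)).
  { intros i k n Hi Hk. apply in_flat_map. exists i. split; [apply in_seq; lia|].
    apply in_map, in_seq; lia. }
  destruct (HS (fun n => range_minus (d n) (L n)) (fun n => HA n (L n))) as [b [Hb HB]].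
  destruct (HBg _ HB) as [_ [Hinf Hal]].
  assert (Hpick : forall n, exists p : nat * nat,
             (n <= fst p)%nat /\ In (d (fst p) (snd p)) (b (fst p))).
  { intro n. destruct (infinite_union_cofinal b Hinf n) as [n' [Hn' Hb']].
    destruct (b n') as [|V rest] eqn:E; [congruence|].
    destruct (Hb n' V) as [k [Hk _]]; [rewrite E; left; auto|].
    exists (n', k). simpl. split; auto. rewrite Hk, E; left; auto. }
  destruct (choice _ Hpick) as [p Hp].
  exists (fun n => fst (p n)), (fun n => snd (p n)). split; [intro n; apply Hp|].
  intro x. destruct (Hal x) as [l Hl].
  destruct (Sfin_selection_avoids d L b HL Hb l) as [N HN]. exists N. intros n Hn.
  destruct (Hp n) as [H1 H2]. apply Hl; [exists (fst (p n)); auto|].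
  apply (HN (fst (p n))); auto; lia.
Qed.

Lemma Sfin_gamma_selection (A B : ((X -> Prop) -> Prop) -> Prop) (c : nat -> nat -> X -> Prop) :
  Sfin A B -> (forall C, B C -> gamma_cover C) ->
  (forall n L, A (range_minus (cap_upto c n) L)) ->
  exists kk, gamma_seq (fun n => c n (kk n)).
Proof.
  intros HS HBg HA. destruct (Sfin_diagonal A B (cap_upto c) HS HBg HA) as [m [kk [Hm Hg]]].
  exists kk. intro x. destruct (Hg x) as [N HN]. exists N. intros n Hn.
  apply (cap_upto_sub c n (m n)); auto.
Qed.

End Diagonal.

(** * Γ_F-covers *)

Lemma S1_Sfin {E : Type} (A B : (E -> Prop) -> Prop) : S1 A B -> Sfin A B.
Proof.
  intros H s Hs. destruct (H s Hs) as [b [Hb HB]]. exists (fun n => b n :: nil). split.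
  - intros n e [<-|[]]; auto.
  - replace (fun e => exists n, In e (b n :: nil)) with (fun e => exists n, b n = e); auto.
    apply set_ext; intro e; split; [intros [n <-]; exists n; left; auto|intros [n [<-|[]]]; eauto].
Qed.

Section GammaF.
Context {X : Type} (T : Topology X).

Record GammaF_data (u z : nat -> X -> Prop) : Prop := {
  GammaF_cozero : forall k, cozero_set T (u k);
  GammaF_zero : forall k, zero_set T (z k);
  GammaF_sub : forall k x, z k x -> u k x;
  GammaF_proper : proper_seq u;
  GammaF_gamma : gamma_seq z }.

Lemma GammaF_data_gamma_seq (u z : nat -> X -> Prop) : GammaF_data u z -> gamma_seq u.
Proof.
  intros Hd x. destruct (GammaF_gamma _ _ Hd x) as [K HK].
  exists K; intros k Hk; apply (GammaF_sub _ _ Hd), HK, Hk.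
Qed.

Lemma GammaF_data_zero_proper (u z : nat -> X -> Prop) : GammaF_data u z -> proper_seq z.
Proof.
  intros Hd k. destruct (GammaF_proper _ _ Hd k) as [x Hx].
  exists x; intro H; apply Hx, (GammaF_sub _ _ Hd), H.
Qed.

Lemma GammaF_range_minus (u z : nat -> X -> Prop) (L : list (X -> Prop)) :
  GammaF_data u z -> GammaF T (range_minus u L).
Proof.
  intros Hd. pose proof (GammaF_data_zero_proper u z Hd) as Hzne.
  set (idx := fun V => epsilon (inhabits 0%nat) (fun k => u k = V)).
  assert (Hidx : forall V, (exists k, u k = V) -> u (idx V) = V).
  { intros V HV. apply (epsilon_spec (inhabits 0%nat) (fun k => u k = V)), HV. }
  split; [apply gamma_cover_range_minus; [apply Hd|apply (GammaF_data_gamma_seq _ _ Hd)]|].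
  split; [intros U [k [<- _]]; apply Hd|].
  exists (fun V => z (idx V)). split.
  { intros U [k [Hk _]]. split; [apply Hd|]. intros x Hx.
    rewrite <- (Hidx U); [apply (GammaF_sub _ _ Hd), Hx|eauto]. }
  apply gamma_cover_intro.
  - intros W [U [_ ->]]. apply Hzne.
  - intro l. destruct (gamma_seq_eventually_notin z Hzne (GammaF_gamma _ _ Hd) l) as [K1 HK1].
    destruct (gamma_seq_eventually_notin u (GammaF_proper _ _ Hd) (GammaF_data_gamma_seq _ _ Hd)
               (L ++ map u (seq 0 K1))) as [K2 HK2].
    exists (z (idx (u K2))). split.
    + exists (u K2). split; auto. exists K2. split; auto.
      intro H; apply (HK2 K2); auto; apply in_or_app; auto.
    + apply HK1. destruct (Nat.lt_ge_cases (idx (u K2)) K1) as [H|H]; auto.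
      exfalso. apply (HK2 K2); auto. apply in_or_app; right.
      rewrite <- (Hidx (u K2)) by eauto. apply in_map, in_seq. lia.
  - intro x. destruct (GammaF_gamma _ _ Hd x) as [K HK]. exists (map z (seq 0 K)).
    intros W [U [_ ->]] Hn. apply HK. destruct (Nat.lt_ge_cases (idx U) K) as [H|H]; auto.
    exfalso; apply Hn, in_map, in_seq. lia.
Qed.

Lemma GammaF_data_extract (C : (X -> Prop) -> Prop) : GammaF T C ->
  exists u z, (forall k, C (u k)) /\ GammaF_data u z.
Proof.
  intros [[[_ Hne] _] [Hco [F [HF HFg]]]].
  destruct (infinite_injective_seq _ (proj1 (proj2 HFg))) as [w [Hw Hinj]].
  destruct (choice _ Hw) as [u Hu].
  exists u, w. split; [intro k; apply Hu|]. split.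
  - intro k; apply Hco, Hu.
  - intro k; rewrite (proj2 (Hu k)); apply HF, Hu.
  - intros k x Hx; rewrite (proj2 (Hu k)) in Hx; apply (proj2 (HF _ (proj1 (Hu k)))), Hx.
  - intro k; apply Hne, Hu.
  - exact (gamma_cover_injective _ w HFg Hw Hinj).
Qed.

Lemma GammaF_data_extract_seq (s : nat -> (X -> Prop) -> Prop) : (forall n, GammaF T (s n)) ->
  exists u z : nat -> nat -> X -> Prop,
    (forall n k, s n (u n k)) /\ forall n, GammaF_data (u n) (z n).
Proof.
  intros Hs.
  assert (H : forall n, exists p : (nat -> X -> Prop) * (nat -> X -> Prop),
             (forall k, s n (fst p k)) /\ GammaF_data (fst p) (snd p)).
  { intro n. destruct (GammaF_data_extract _ (Hs n)) as [u [z H]]. exists (u, z); exact H. }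
  destruct (choice _ H) as [f Hf].
  exists (fun n => fst (f n)), (fun n => snd (f n)). split; intros; apply Hf.
Qed.

Lemma GammaF_data_cap (u z : nat -> nat -> X -> Prop) j :
  (forall i, GammaF_data (u i) (z i)) -> GammaF_data (cap_upto u j) (cap_upto z j).
Proof.
  intros Hd. split.
  - intro k; apply cap_upto_closed; [apply cozero_set_and|intros; apply Hd].
  - intro k; apply cap_upto_closed; [apply zero_set_and|intros; apply Hd].
  - intros k x; apply cap_upto_mono; intros; apply (GammaF_sub _ _ (Hd _)); auto.
  - apply cap_upto_proper, Hd.
  - apply cap_upto_gamma_seq; intro; apply Hd.
Qed.

Lemma GammaCl_range_minus (c : nat -> X -> Prop) (L : list (X -> Prop)) :
  (forall k, is_clopen T (c k)) -> proper_seq c -> gamma_seq c -> GammaCl T (range_minus c L).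
Proof. intros Hc Hne Hg. split; [apply gamma_cover_range_minus; auto|intros U [k [<- _]]; auto]. Qed.

Lemma GammaCl_GammaF (C : (X -> Prop) -> Prop) : GammaCl T C -> GammaF T C.
Proof.
  intros [Hg Hcl]. split; auto. split; [intros U HU; apply clopen_cozero_set; auto|].
  exists (fun U => U). split; [intros U HU; split; [apply clopen_zero_set|]; auto|].
  replace (fun V => exists U, C U /\ V = U) with C; auto.
  apply set_ext; intro V; split; [intro; exists V; auto|intros [U [HU ->]]; auto].
Qed.

Lemma S1_GammaF_GammaO_intro :
  (forall u z, (forall n, GammaF_data (u n) (z n)) -> exists kk, gamma_seq (fun n => u n (kk n))) ->
  S1 (GammaF T) (GammaO T).
Proof.
  intros H s Hs. destruct (GammaF_data_extract_seq s Hs) as [u [z [Hsu Hd]]].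
  destruct (H u z Hd) as [kk Hkk]. exists (fun n => u n (kk n)). split; [intro n; apply Hsu|].
  split; [apply gamma_cover_range; auto; intro n; apply (GammaF_proper _ _ (Hd n))|].
  intros U [n <-]. apply cozero_set_open, Hd.
Qed.

Lemma S1_GammaF_of_Sfin : Sfin (GammaF T) (GammaO T) -> S1 (GammaF T) (GammaO T).
Proof.
  intros H2. apply S1_GammaF_GammaO_intro. intros u z Hd.
  apply (Sfin_gamma_selection (GammaF T) (GammaO T) u H2 (fun C HC => proj1 HC)).
  intros n L. apply GammaF_range_minus with (z := cap_upto z n), GammaF_data_cap, Hd.
Qed.

Lemma clopen_between (u z : nat -> X -> Prop) : strongly_zero_dim T -> GammaF_data u z ->
  exists c, forall k, is_clopen T (c k) /\ (forall x, z k x -> c k x) /\ (forall x, c k x -> u k x).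
Proof.
  intros Hszd Hd.
  apply (choice (fun k C => is_clopen T C /\ (forall x, z k x -> C x) /\ (forall x, C x -> u k x))).
  intro k.
  destruct (Hszd (z k) (fun x => ~ u k x) (GammaF_zero _ _ Hd k)
              (zero_set_compl T _ (GammaF_cozero _ _ Hd k))) as [C [HC [H1 H2]]].
  - intros x [A B]; apply B, (GammaF_sub _ _ Hd), A.
  - exists C; split; auto. split; auto. intros x Cx. apply NNPP; intro N. apply (H2 x); auto.
Qed.

Lemma S1_GammaF_of_Sfin_clopen :
  Sfin (GammaCl T) (GammaCl T) -> strongly_zero_dim T -> S1 (GammaF T) (GammaO T).
Proof.
  intros H3 Hszd. apply S1_GammaF_GammaO_intro. intros u z Hd.
  destruct (choice _ (fun n => clopen_between (u n) (z n) Hszd (Hd n))) as [c Hc].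
  destruct (Sfin_gamma_selection (GammaCl T) (GammaCl T) c H3 (fun C HC => proj1 HC)) as [kk Hkk].
  - intros n L. apply GammaCl_range_minus.
    + intro k; apply cap_upto_closed; [apply clopen_and|intros; apply Hc].
    + apply cap_upto_proper. intro k. destruct (GammaF_proper _ _ (Hd 0%nat) k) as [x Hx].
      exists x; intro H; apply Hx, Hc, H.
    + apply cap_upto_gamma_seq. intros i x. destruct (GammaF_gamma _ _ (Hd i) x) as [K HK].
      exists K; intros k Hk; apply Hc, HK, Hk.
  - exists kk. intro x. destruct (Hkk x) as [N HN]. exists N; intros n Hn; apply Hc, HN, Hn.
Qed.

Lemma Sfin_clopen_of_S1_GammaF : S1 (GammaF T) (GammaO T) -> Sfin (GammaCl T) (GammaCl T).
Proof.
  intros H4. apply S1_Sfin. intros s Hs.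
  destruct (H4 s (fun n => GammaCl_GammaF _ (Hs n))) as [b [Hb [Hg _]]].
  exists b. split; auto. split; auto. intros U [n <-]. apply (Hs n), Hb.
Qed.

End GammaF.

(** * Omitted values and strong zero-dimensionality *)

Lemma nested_intervals_point (P : nat -> R -> Prop) (l0 r0 : R) :
  l0 < r0 ->
  (forall l r M, l < r -> exists n l' r', (M <= n)%nat /\ l <= l' /\ l' < r' /\ r' <= r /\
      forall t, l' <= t <= r' -> P n t) ->
  exists t (ns : nat -> nat), l0 <= t <= r0 /\ (forall i j, (i < j)%nat -> (ns i < ns j)%nat) /\
    forall i, P (ns i) t.
Proof.
  intros H0 Hsub.
  set (Step := fun p q : R * R * nat => let '(l, r, n) := p in let '(l', r', n') := q in
          l < r -> (S n <= n')%nat /\ l <= l' /\ l' < r' /\ r' <= r /\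
                   forall t, l' <= t <= r' -> P n' t).
  assert (Hstep : forall p, exists q, Step p q).
  { intros [[l r] n]. destruct (classic (l < r)) as [Hlr|Hlr].
    - destruct (Hsub l r (S n) Hlr) as [n' [l' [r' H]]]. exists (l', r', n'). intros _; exact H.
    - exists (l, r, n); intro; contradiction. }
  destruct (choice _ Hstep) as [g Hg].
  set (sq := fun i => Nat.iter i g (l0, r0, 0%nat)).
  set (li := fun i => fst (fst (sq i))). set (ri := fun i => snd (fst (sq i))).
  set (ni := fun i => snd (sq i)).
  assert (St : forall i, li i < ri i -> (S (ni i) <= ni (S i))%nat /\ li i <= li (S i) /\
      li (S i) < ri (S i) /\ ri (S i) <= ri i /\ forall t, li (S i) <= t <= ri (S i) -> P (ni (S i)) t).
  { intro i. specialize (Hg (sq i)). unfold li, ri, ni.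
    replace (sq (S i)) with (g (sq i)) by reflexivity.
    destruct (sq i) as [[l r] n], (g (l, r, n)) as [[l' r'] n']. exact Hg. }
  assert (Inv : forall i, li i < ri i).
  { induction i as [|i IH]; [exact H0|apply (St i IH)]. }
  assert (Mono : forall i j, (i <= j)%nat -> li i <= li j /\ ri j <= ri i).
  { intros i j Hij. induction Hij as [|j _ [IH1 IH2]]; [lra|].
    destruct (St j (Inv j)) as [_ [A1 [_ [A3 _]]]]. lra. }
  destruct (completeness (fun y => exists i, y = li i)) as [t [Ht1 Ht2]].
  { exists (ri 0%nat). intros y [i ->]. pose proof (Mono 0%nat i ltac:(lia)). pose proof (Inv i). lra. }
  { exists (li 0%nat); eauto. }
  assert (Ht : forall i, li i <= t <= ri i).
  { intro i. split; [apply Ht1; eauto|]. apply Ht2. intros y [j ->].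
    pose proof (Mono i (Nat.max i j) ltac:(lia)). pose proof (Mono j (Nat.max i j) ltac:(lia)).
    pose proof (Inv (Nat.max i j)). lra. }
  exists t, (fun i => ni (S i)). split; [apply (Ht 0%nat)|]. split.
  - intros i j Hij. induction Hij as [|j _ IH]; [apply (St (S i) (Inv _))|].
    pose proof (proj1 (St (S j) (Inv _))). lia.
  - intro i. apply (St i (Inv i)), Ht.
Qed.

Definition dist_Z (s : R) : R := Rmin (s - IZR (Int_part s)) (IZR (Int_part s) + 1 - s).

Lemma dist_Z_le (s : R) (z : Z) : dist_Z s <= Rabs (s - IZR z).
Proof.
  destruct (base_Int_part s) as [H1 H2]. unfold dist_Z.
  destruct (Z.le_gt_cases z (Int_part s)) as [Hz|Hz].
  - apply IZR_le in Hz. rewrite Rabs_pos_eq by lra. eapply Rle_trans; [apply Rmin_l|lra].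
  - assert (Hz' : (Int_part s + 1 <= z)%Z) by lia. apply IZR_le in Hz'. rewrite plus_IZR in Hz'.
    rewrite Rabs_left1 by lra. eapply Rle_trans; [apply Rmin_r|lra].
Qed.

Lemma dist_Z_attained (s : R) : exists z : Z, dist_Z s = Rabs (s - IZR z).
Proof.
  destruct (base_Int_part s) as [H1 H2]. unfold dist_Z. apply Rmin_case.
  - exists (Int_part s). rewrite Rabs_pos_eq; lra.
  - exists (Int_part s + 1)%Z. rewrite plus_IZR, Rabs_left1; lra.
Qed.

Lemma dist_Z_nonexpansive (a b : R) : Rabs (dist_Z a - dist_Z b) <= Rabs (a - b).
Proof.
  assert (K : forall x y, dist_Z x <= dist_Z y + Rabs (x - y)).
  { intros x y. destruct (dist_Z_attained y) as [z Hz].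
    eapply Rle_trans; [apply (dist_Z_le x z)|]. rewrite Hz.
    replace (x - IZR z) with ((x - y) + (y - IZR z)) by ring.
    pose proof (Rabs_triang (x - y) (y - IZR z)); lra. }
  pose proof (K a b); pose proof (K b a). rewrite Rabs_minus_sym in H0.
  unfold Rabs at 1; destruct (Rcase_abs (dist_Z a - dist_Z b)); lra.
Qed.

Lemma dist_Z_shift (m : Z) (s : R) : IZR m <= s <= IZR m + / 2 -> dist_Z s = s - IZR m.
Proof.
  intros Hs. apply Rle_antisym.
  - pose proof (dist_Z_le s m). rewrite Rabs_pos_eq in H by lra. exact H.
  - destruct (dist_Z_attained s) as [z ->]. destruct (Z.le_gt_cases z m) as [E|E].
    + apply IZR_le in E. rewrite Rabs_pos_eq; lra.
    + assert (E' : (m + 1 <= z)%Z) by lia. apply IZR_le in E'. rewrite plus_IZR in E'.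
      rewrite Rabs_left1; lra.
Qed.

Definition band_lo (k : nat) : R := / (INR k + 3).
Definition band_hi (k : nat) : R := / (INR k + 2).
Definition band_mid (k : nat) : R := (band_lo k + band_hi k) / 2.
Definition band_rad (k : nat) : R := (band_hi k - band_lo k) / 2.

Lemma band_bounds (k : nat) : 0 < band_lo k < band_hi k /\ band_hi k <= / 2.
Proof.
  pose proof (pos_INR k). unfold band_lo, band_hi. split; [split|].
  - apply Rinv_0_lt_compat; lra.
  - apply Rinv_lt_contravar; [apply Rmult_lt_0_compat|]; lra.
  - apply Rinv_le_contravar; lra.
Qed.

Lemma in_band (k : nat) (s : R) :
  Rabs (s - band_mid k) < band_rad k <-> band_lo k < s < band_hi k.
Proof.
  unfold band_mid, band_rad. split.
  - intros H. apply Rabs_def2 in H. lra.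
  - intros H. apply Rabs_def1; lra.
Qed.

Lemma bands_disjoint (k k' : nat) (s : R) :
  Rabs (s - band_mid k) < band_rad k -> Rabs (s - band_mid k') < band_rad k' -> k = k'.
Proof.
  rewrite !in_band. intros H1 H2.
  assert (G : forall i j, (i < j)%nat -> band_hi j <= band_lo i).
  { intros i j Hij. unfold band_lo, band_hi. apply Rinv_le_contravar.
    - pose proof (pos_INR i); lra.
    - apply le_INR in Hij. rewrite S_INR in Hij. lra. }
  destruct (Nat.lt_trichotomy k k') as [H|[H|H]]; auto; pose proof (G _ _ H); lra.
Qed.

Definition wave (n : nat) (t : R) : R := dist_Z (INR (S n) * t).

Definition inner_band (n k : nat) (t : R) : Prop :=
  Rabs (wave n t - band_mid k) <= band_rad k / 2.

Lemma inner_band_subinterval (n k : nat) (l r : R) : 2 / INR (S n) < r - l ->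
  exists l' r', l <= l' /\ l' < r' /\ r' <= r /\ forall t, l' <= t <= r' -> inner_band n k t.
Proof.
  intros H. set (L := INR (S n)) in *.
  assert (HL : L >= 1) by (unfold L; rewrite S_INR; pose proof (pos_INR n); lra).
  assert (H2 : 2 < L * r - L * l).
  { apply (Rmult_lt_compat_l L) in H; [|lra]. replace (L * (2 / L)) with 2 in H by (field; lra). lra. }
  destruct (archimed (L * l)) as [Hm1 Hm2]. set (m := up (L * l)) in *.
  destruct (band_bounds k) as [[B1 B2] B3].
  assert (Hc1 : 0 < band_mid k - band_rad k / 2) by (unfold band_mid, band_rad; lra).
  assert (Hc2 : band_mid k + band_rad k / 2 < / 2) by (unfold band_mid, band_rad; lra).
  assert (Hrad : 0 < band_rad k) by (unfold band_rad; lra).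
  assert (E1 : forall y, L * (y / L) = y) by (intro; field; lra).
  exists ((IZR m + band_mid k - band_rad k / 2) / L), ((IZR m + band_mid k + band_rad k / 2) / L).
  split; [|split; [|split]].
  - apply Rmult_le_reg_l with L; [lra|]. rewrite E1. lra.
  - apply Rmult_lt_reg_l with L; [lra|]. rewrite !E1. lra.
  - apply Rmult_le_reg_l with L; [lra|]. rewrite E1. lra.
  - intros t [Ht1 Ht2].
    apply (Rmult_le_compat_l L) in Ht1, Ht2; [|lra|lra]. rewrite E1 in Ht1, Ht2.
    unfold inner_band, wave. fold L. rewrite (dist_Z_shift m) by lra. apply Rabs_le; lra.
Qed.

Lemma inner_band_point (n k : nat) : exists t, 0 < t < 1 /\ inner_band n k t.
Proof.
  set (L := INR (S n)). assert (HL : L >= 1) by (unfold L; rewrite S_INR; pose proof (pos_INR n); lra).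
  destruct (band_bounds k) as [[B1 B2] B3].
  assert (Hc : 0 < band_mid k < / 2) by (unfold band_mid; lra).
  exists (band_mid k / L). split.
  - split; [apply Rdiv_lt_0_compat; lra|].
    apply Rmult_lt_reg_l with L; [lra|]. replace (L * (band_mid k / L)) with (band_mid k) by (field; lra). lra.
  - unfold inner_band, wave. fold L. replace (L * (band_mid k / L)) with (band_mid k) by (field; lra).
    rewrite (dist_Z_shift 0) by (simpl; lra). simpl. unfold band_rad.
    rewrite Rminus_0_r, Rminus_diag, Rabs_R0. lra.
Qed.

Section Gap.
Context {X : Type} (T : Topology X).

Lemma continuous_wave (f : X -> R) (n : nat) : continuous T f -> continuous T (fun x => wave n (f x)).
Proof.
  intros Hf. apply (continuous_comp T (fun x => INR (S n) * f x) dist_Z).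
  - apply continuous_mult; [apply continuous_const|exact Hf].
  - intro x; apply nonexpansive_continuity_pt, dist_Z_nonexpansive.
Qed.

(* Each value lies in at most one open band, so every point meets the zero-set condition for
   all large [k]. *)
Lemma band_GammaF_data (f : X -> R) (n : nat) :
  continuous T f -> (forall t, 0 < t < 1 -> exists x, f x = t) ->
  GammaF_data T (fun k x => band_rad k / 2 < Rabs (wave n (f x) - band_mid k))
                (fun k x => band_rad k <= Rabs (wave n (f x) - band_mid k)).
Proof.
  intros Hf Hsurj.
  assert (Hd : forall k, continuous T (fun x => Rabs (wave n (f x) - band_mid k))).
  { intro k. apply continuous_abs, continuous_minus; [apply continuous_wave, Hf|apply continuous_const]. }
  assert (Hrad : forall k, 0 < band_rad k).
  { intro k. destruct (band_bounds k) as [[_ B] _]. unfold band_rad; lra. }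
  split.
  - intro k; apply cozero_set_lt; [apply continuous_const|apply Hd].
  - intro k; apply zero_set_le; [apply continuous_const|apply Hd].
  - intros k x. specialize (Hrad k). lra.
  - intro k. destruct (inner_band_point n k) as [t [Ht Hin]]. destruct (Hsurj t Ht) as [x <-].
    exists x. unfold inner_band in Hin. lra.
  - intro x. destruct (classic (exists k0, Rabs (wave n (f x) - band_mid k0) < band_rad k0))
      as [[k0 Hk0]|Hno].
    + exists (S k0). intros k Hk. apply Rnot_lt_le; intro Hlt.
      pose proof (bands_disjoint k k0 _ Hlt Hk0). lia.
    + exists 0%nat. intros k _. apply Rnot_lt_le; intro Hlt; apply Hno; eauto.
Qed.

(* If [f] took every value in ]0,1[, a nested-interval argument would produce a value
   [t = f x] lying in the inner band of infinitely many distinct selected sets, so [x] would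
   miss infinitely many members of the selected γ-cover. *)
Lemma S1_GammaF_continuous_gap (f : X -> R) : S1 (GammaF T) (GammaO T) -> continuous T f ->
  exists t, 0 < t < 1 /\ forall x, f x <> t.
Proof.
  intros H4 Hf. apply NNPP; intro Hn.
  assert (Hsurj : forall t, 0 < t < 1 -> exists x, f x = t).
  { intros t Ht. apply NNPP; intro Hx. apply Hn. exists t; split; auto. intros x E; apply Hx; eauto. }
  set (U := fun n k x => band_rad k / 2 < Rabs (wave n (f x) - band_mid k)).
  destruct (H4 (fun n => range_minus (U n) nil)) as [b [Hb [Hgam _]]].
  { intro n. eapply GammaF_range_minus, band_GammaF_data; eauto. }
  destruct (choice (fun n k => U n k = b n)) as [kn Hkn].
  { intro n. destruct (Hb n) as [k [Hk _]]; eauto. }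
  pose proof (infinite_range_new_cofinal b (proj1 (proj2 Hgam))) as Hnew.
  destruct (nested_intervals_point
              (fun n t => (forall j, (j < n)%nat -> b j <> b n) /\ inner_band n (kn n) t) (/ 4) (3 / 4))
    as [t [ns [Ht [Hns HP]]]]; [lra| |].
  - intros l r M Hlr. destruct (archimed_cor1 ((r - l) / 2)) as [N [HN1 HN2]]; [lra|].
    destruct (Hnew (Nat.max M N)) as [n [Hn' Hnn]].
    destruct (inner_band_subinterval n (kn n) l r) as [l' [r' H]].
    { assert (INR N <= INR (S n)) by (apply le_INR; lia).
      assert (0 < INR N) by (apply lt_0_INR; lia).
      assert (/ INR (S n) <= / INR N) by (apply Rinv_le_contravar; lra).
      unfold Rdiv. lra. }
    exists n, l', r'. split; [lia|]. intuition.
  - destruct (Hsurj t ltac:(lra)) as [x Hx].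
    assert (Hinj : Injective (fun i => b (ns i))).
    { intros i j E. destruct (Nat.lt_trichotomy i j) as [H|[H|H]]; auto; exfalso.
      - apply (proj1 (HP j) (ns i)); [apply Hns, H|exact E].
      - apply (proj1 (HP i) (ns j)); [apply Hns, H|symmetry; exact E]. }
    destruct (gamma_cover_injective _ _ Hgam (fun i => ex_intro _ (ns i) eq_refl) Hinj x) as [K HK].
    specialize (HK K (le_n K)). simpl in HK. rewrite <- Hkn in HK. unfold U in HK. rewrite Hx in HK.
    pose proof (proj2 (HP K)) as Hin. unfold inner_band in Hin. lra.
Qed.

Lemma strongly_zero_dim_of_S1_GammaF : S1 (GammaF T) (GammaO T) -> strongly_zero_dim T.
Proof.
  intros H4 Z1 Z2 H1 H2 Hd.
  destruct (zero_sets_urysohn T Z1 Z2 H1 H2 Hd) as [h [Hh Hhp]].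
  destruct (S1_GammaF_continuous_gap h H4 Hh) as [t [Ht Hx]].
  exists (fun x => h x < t). split; [split|split].
  - apply cozero_set_open, cozero_set_lt; [exact Hh|apply continuous_const].
  - unfold is_closed. replace (fun x => ~ h x < t) with (fun x => t < h x).
    + apply cozero_set_open, cozero_set_lt; [apply continuous_const|exact Hh].
    + apply set_ext; intro x; specialize (Hx x). split; [intros; lra|intros H; apply Rnot_lt_le in H; lra].
  - intros x Zx. rewrite (proj1 (Hhp x) Zx). lra.
  - intros x Zx. rewrite (proj2 (proj2 (Hhp x)) Zx). lra.
Qed.

End Gap.

(** * Sequences in C_p(X) *)

Definition CX_fun {X : Type} {T : Topology X} (g : CX T) : X -> R := proj1_sig g.
Coercion CX_fun : CX >-> Funclass.

Section PointwiseConvergence.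
Context {X : Type} (T : Topology X).

Definition Cp_ball (f : CX T) (xs : list X) (eps : R) : CX T -> Prop :=
  fun h => forall x, In x xs -> Rabs (h x - f x) < eps.

Definition cvg_pointwise (g : nat -> CX T) (f : CX T) : Prop :=
  forall x eps, eps > 0 -> exists K, forall k, (K <= k)%nat -> Rabs (g k x - f x) < eps.

Lemma Cp_ball_open (f : CX T) (xs : list X) (eps : R) : Cp_open T (Cp_ball f xs eps).
Proof.
  intros g Hg.
  assert (He : exists e, e > 0 /\ forall x, In x xs -> Rabs (g x - f x) + e <= eps).
  { clear -Hg. induction xs as [|a xs IH].
    - exists 1; split; [lra|intros x []].
    - destruct IH as [e [He H]]; [intros x Hx; apply Hg; right; auto|].
      pose proof (Hg a (or_introl eq_refl)).
      exists (Rmin e (eps - Rabs (g a - f a))). split; [apply Rmin_glb_lt; lra|].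
      intros x [<-|Hx].
      + pose proof (Rmin_r e (eps - Rabs (g a - f a))). lra.
      + pose proof (Rmin_l e (eps - Rabs (g a - f a))). pose proof (H x Hx). lra. }
  destruct He as [e [He H]]. exists xs, e. split; auto.
  intros h Hh x Hx. specialize (Hh x Hx). specialize (H x Hx).
  replace (h x - f x) with ((h x - g x) + (g x - f x)) by ring.
  pose proof (Rabs_triang (h x - g x) (g x - f x)). unfold CX_fun in *. lra.
Qed.

Lemma Gamma_pt_ball (f : CX T) (A : CX T -> Prop) (xs : list X) (eps : R) :
  Gamma_pt (Cp T) f A -> eps > 0 -> almost_all_in A (Cp_ball f xs eps).
Proof.
  intros [_ [_ H]] He. apply H; [apply Cp_ball_open|].
  intros x _. unfold CX_fun. rewrite Rminus_diag, Rabs_R0; auto.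
Qed.

Lemma CX_neq_point (g f : CX T) : g <> f -> exists x, g x <> f x.
Proof.
  intros H. apply NNPP; intro Hn. apply H. destruct g as [g Hg], f as [f Hf].
  assert (g = f) as <-.
  { apply functional_extensionality; intro x. apply NNPP; intro E; apply Hn. exists x; exact E. }
  f_equal. apply proof_irrelevance.
Qed.

Lemma Gamma_pt_extract_seq (f : CX T) (A : CX T -> Prop) : Gamma_pt (Cp T) f A ->
  exists g : nat -> CX T, (forall k, A (g k)) /\ (forall k, g k <> f) /\ cvg_pointwise g f.
Proof.
  intros HA. pose proof HA as [Hinf [Hnf _]].
  destruct (infinite_injective_seq _ Hinf) as [g [Hg Hinj]]. exists g. split; auto. split.
  - intros k Hk. apply Hnf. rewrite <- Hk; auto.
  - intros x eps He.
    destruct (almost_all_in_injective _ _ g (Gamma_pt_ball f A (x :: nil) eps HA He) Hg Hinj)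
      as [K HK].
    exists K. intros k Hk. apply (HK k Hk). left; auto.
Qed.

Lemma Gamma_pt_of_lists (f : CX T) (b : nat -> list (CX T)) :
  (forall n g, In g (b n) -> g <> f) -> (forall M, exists n, (M <= n)%nat /\ b n <> nil) ->
  (forall x eps, eps > 0 -> exists N, forall n, (N <= n)%nat ->
     forall g, In g (b n) -> Rabs (g x - f x) < eps) ->
  Gamma_pt (Cp T) f (fun g => exists n, In g (b n)).
Proof.
  intros Hne Hnn Hc. split; [|split].
  - intro l.
    assert (Hl : exists N, forall n, (N <= n)%nat -> forall g, In g (b n) -> ~ In g l).
    { induction l as [|g0 l [N HN]]; [exists 0%nat; intros n _ g _ []|].
      destruct (classic (g0 = f)) as [E|E].
      - exists N. intros n Hn g Hg [<-|Hgl]; [apply (Hne n g0); auto|apply (HN n Hn g Hg Hgl)].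
      - destruct (CX_neq_point g0 f E) as [x Hx].
        destruct (Hc x (Rabs (g0 x - f x))) as [N' HN']; [apply Rabs_pos_lt; lra|].
        exists (Nat.max N N'). intros n Hn g Hg [<-|Hgl].
        + specialize (HN' n ltac:(lia) g0 Hg). lra.
        + apply (HN n ltac:(lia) g Hg Hgl). }
    destruct Hl as [N HN]. destruct (Hnn N) as [n [Hn Hb]].
    destruct (b n) as [|g rest] eqn:Eb; [congruence|].
    exists g. split; [exists n; rewrite Eb; left; auto|]. apply (HN n Hn). rewrite Eb; left; auto.
  - intros [n Hn]. apply (Hne n f Hn); auto.
  - intros W HW Wf. destruct (HW f Wf) as [xs [eps [He HWb]]].
    destruct (eventually_forall_in xs
                (fun x n => forall g, In g (b n) -> Rabs (g x - f x) < eps)) as [N HN].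
    { intro x. apply Hc; auto. }
    exists (flat_map b (seq 0 N)). intros g [n Hg] Hn. apply HWb.
    intros x Hx. destruct (Nat.lt_ge_cases n N) as [H|H].
    + exfalso; apply Hn, in_flat_map. exists n; split; auto. apply in_seq; lia.
    + apply (HN n H x Hx g Hg).
Qed.

Lemma Gamma_pt_of_seq (f : CX T) (g : nat -> CX T) :
  (forall k, g k <> f) -> cvg_pointwise g f -> Gamma_pt (Cp T) f (fun h => exists k, g k = h).
Proof.
  intros Hne Hc.
  replace (fun h => exists k, g k = h) with (fun h => exists k, In h (g k :: nil)).
  - apply Gamma_pt_of_lists.
    + intros n h [<-|[]]; auto.
    + intro M; exists M; split; [lia|discriminate].
    + intros x eps He. destruct (Hc x eps He) as [K HK]. exists K. intros n Hn h [<-|[]]; auto.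
  - apply set_ext; intro h; split; [intros [k [<-|[]]]; eauto|intros [k <-]; exists k; left; auto].
Qed.

End PointwiseConvergence.

Lemma finite_witnesses {X : Type} (l : list (X -> Prop)) :
  exists xs, forall V, In V l -> (exists y, ~ V y) -> exists x, In x xs /\ ~ V x.
Proof.
  induction l as [|V0 l [xs Hxs]]; [exists nil; intros V []|].
  destruct (classic (exists y, ~ V0 y)) as [[y Hy]|Hn].
  - exists (y :: xs). intros V [<-|HV] Hy'; [exists y; split; [left|]; auto|].
    destruct (Hxs V HV Hy') as [x [Hx1 Hx2]]. exists x; split; [right|]; auto.
  - exists xs. intros V [<-|HV] Hy'; [tauto|auto].
Qed.

Section CpToGammaF.
Context {X : Type} (T : Topology X).

Definition zero_CX : CX T := exist _ (fun _ => 0) (continuous_const T 0).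

Definition ne_one_set (g : CX T) : X -> Prop := fun x => g x <> 1.

Lemma GammaO_of_Gamma_pt_zero (G : CX T -> Prop) :
  Gamma_pt (Cp T) zero_CX G -> (forall g, G g -> exists x, g x = 1) ->
  GammaO T (fun V => exists g, G g /\ V = ne_one_set g).
Proof.
  intros HG Hone. split.
  - apply gamma_cover_intro.
    + intros V [g [Hg ->]]. destruct (Hone g Hg) as [x Hx]. exists x; unfold ne_one_set; tauto.
    + intro l. destruct (finite_witnesses l) as [xs Hxs].
      destruct (Gamma_pt_ball T zero_CX G xs 1 HG ltac:(lra)) as [l' Hl'].
      destruct (proj1 HG l') as [g [Hg Hgl']].
      exists (ne_one_set g). split; [exists g; auto|]. intro Hin.
      destruct (Hxs _ Hin) as [x [Hx1 Hx2]].
      { destruct (Hone g Hg) as [y Hy]. exists y. unfold ne_one_set; tauto. }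
      specialize (Hl' g Hg Hgl' x Hx1). unfold ne_one_set in Hx2. apply NNPP in Hx2.
      unfold CX_fun in *; simpl in *. rewrite Rminus_0_r, Hx2, Rabs_R1 in Hl'. lra.
    + intro x. destruct (Gamma_pt_ball T zero_CX G (x :: nil) 1 HG ltac:(lra)) as [l Hl].
      exists (map ne_one_set l). intros V [g [Hg ->]] Hn E.
      apply Hn, in_map, NNPP. intro Hgl.
      specialize (Hl g Hg Hgl x (or_introl eq_refl)).
      unfold CX_fun in *; simpl in *. rewrite Rminus_0_r, E, Rabs_R1 in Hl. lra.
  - intros V [g [_ ->]]. exact (proj2_sig g _ (neq_R_open 1)).
Qed.

Lemma urysohn_seq (u z : nat -> X -> Prop) : GammaF_data T u z ->
  exists h : nat -> CX T, forall k x, (z k x -> h k x = 0) /\ (h k x = 1 <-> ~ u k x).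
Proof.
  intros Hd. apply (choice (fun k (h : CX T) => forall x, (z k x -> h x = 0) /\ (h x = 1 <-> ~ u k x))).
  intro k.
  destruct (zero_sets_urysohn T (z k) (fun x => ~ u k x) (GammaF_zero _ _ _ Hd k)
              (zero_set_compl T _ (GammaF_cozero _ _ _ Hd k))) as [h [Hc Hp]].
  - intros x [A B]; apply B, (GammaF_sub _ _ _ Hd), A.
  - exists (exist _ h Hc). exact Hp.
Qed.

Lemma Sfin_GammaF_of_Sfin_pt :
  (forall f : CX T, Sfin (Gamma_pt (Cp T) f) (Gamma_pt (Cp T) f)) -> Sfin (GammaF T) (GammaO T).
Proof.
  intros H1 s Hs. destruct (GammaF_data_extract_seq T s Hs) as [u [z [Hsu Hd]]].
  destruct (choice _ (fun n => urysohn_seq (u n) (z n) (Hd n))) as [h Hh].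
  assert (Hone : forall n k, exists x, h n k x = 1).
  { intros n k. destruct (GammaF_proper _ _ _ (Hd n) k) as [x Hx]. exists x. apply Hh, Hx. }
  assert (Hlevel : forall n k, ne_one_set (h n k) = u n k).
  { intros n k. apply set_ext; intro x. unfold ne_one_set. rewrite (proj2 (Hh n k x)).
    split; [apply NNPP|tauto]. }
  destruct (H1 zero_CX (fun n g => exists k, h n k = g)) as [b [Hb HG]].
  { intro n. apply Gamma_pt_of_seq.
    - intros k E. destruct (Hone n k) as [x Hx]. rewrite E in Hx. unfold CX_fun in Hx; simpl in Hx. lra.
    - intros x eps He. destruct (GammaF_gamma _ _ _ (Hd n) x) as [K HK]. exists K. intros k Hk.
      rewrite (proj1 (Hh n k x) (HK k Hk)). unfold CX_fun; simpl. rewrite Rminus_0_r, Rabs_R0; auto. }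
  exists (fun n => map ne_one_set (b n)). split.
  - intros n V HV. apply in_map_iff in HV. destruct HV as [g [<- Hg]].
    destruct (Hb n g Hg) as [k <-]. rewrite Hlevel. apply Hsu.
  - replace (fun V => exists n, In V (map ne_one_set (b n)))
      with (fun V => exists g, (exists n, In g (b n)) /\ V = ne_one_set g).
    + apply GammaO_of_Gamma_pt_zero; auto.
      intros g [n Hg]. destruct (Hb n g Hg) as [k <-]. apply Hone.
    + apply set_ext; intro V. split.
      * intros [g [[n Hg] ->]]. exists n. apply in_map; auto.
      * intros [n HV]. apply in_map_iff in HV. destruct HV as [g [<- Hg]]. eauto.
Qed.

End CpToGammaF.

Definition inv_succ (n : nat) : R := / INR (S n).

Lemma inv_succ_pos (n : nat) : inv_succ n > 0.
Proof. apply Rinv_0_lt_compat, lt_0_INR; lia. Qed.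

Lemma inv_succ_antitone (i j : nat) : (i <= j)%nat -> inv_succ j <= inv_succ i.
Proof. intros H. apply Rinv_le_contravar; [apply lt_0_INR; lia|apply le_INR; lia]. Qed.

Lemma inv_succ_small (eps : R) : eps > 0 -> exists N, forall j, (N <= j)%nat -> inv_succ j < eps.
Proof.
  intros He. destruct (archimed_cor1 eps He) as [N [HN1 HN2]]. exists N. intros j Hj.
  eapply Rle_lt_trans; [|exact HN1]. apply Rinv_le_contravar; [apply lt_0_INR; lia|apply le_INR; lia].
Qed.

Section GammaFToCp.
Context {X : Type} (T : Topology X).
Variables (f : CX T) (gs : nat -> nat -> CX T).
Hypothesis gs_neq : forall n k, gs n k <> f.
Hypothesis gs_cvg : forall n, cvg_pointwise T (gs n) f.

Let dist_f (n k : nat) (x : X) : R := Rabs (gs n k x - f x).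

Lemma continuous_dist_f (n k : nat) : continuous T (dist_f n k).
Proof. apply continuous_abs, continuous_minus; [exact (proj2_sig (gs n k))|exact (proj2_sig f)]. Qed.

Lemma Sfin_pt_uniform_stages :
  (exists M, forall n, (M <= n)%nat -> exists k, forall x, dist_f n k x < inv_succ n) ->
  exists b : nat -> list (CX T), (forall n g, In g (b n) -> exists k, gs n k = g) /\
    Gamma_pt (Cp T) f (fun g => exists n, In g (b n)).
Proof.
  intros [M HM].
  destruct (choice (fun n k => (M <= n)%nat -> forall x, dist_f n k x < inv_succ n)) as [kf Hkf].
  { intro n. destruct (le_lt_dec M n) as [H|H]; [destruct (HM n H) as [k Hk]; eauto|].
    exists 0%nat; intro; lia. }
  exists (fun n => gs n (kf n) :: nil). split; [intros n g [<-|[]]; eauto|].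
  apply Gamma_pt_of_lists.
  - intros n g [<-|[]]; auto.
  - intro M'; exists M'; split; [lia|discriminate].
  - intros x eps He. destruct (inv_succ_small eps He) as [N HN]. exists (Nat.max M N).
    intros n Hn g [<-|[]]. eapply Rlt_trans; [apply (Hkf n ltac:(lia) x)|]. apply HN; lia.
Qed.

(* On infinitely many stages no member is uniformly [inv_succ n]-close to [f]; there the sets
   [dist_f < inv_succ n] form proper cozero γ-covers and a diagonal selection applies. *)
Lemma Sfin_pt_nonuniform_stages : Sfin (GammaF T) (GammaO T) ->
  (forall M, exists n, (M <= n)%nat /\ forall k, exists x, ~ dist_f n k x < inv_succ n) ->
  exists b : nat -> list (CX T), (forall n g, In g (b n) -> exists k, gs n k = g) /\
    Gamma_pt (Cp T) f (fun g => exists n, In g (b n)).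
Proof.
  intros H2 Hbad. destruct (cofinal_increasing_enum _ Hbad) as [sg [Hsg Hinc]].
  assert (Hsg_ge : forall j, (j <= sg j)%nat).
  { induction j as [|j IH]; [lia|]. pose proof (Hinc j (S j) (le_n _)). lia. }
  set (U := fun j k x => dist_f (sg j) k x < inv_succ (sg j)).
  set (Z := fun j k x => dist_f (sg j) k x <= inv_succ (sg j) / 2).
  assert (Hd : forall j, GammaF_data T (U j) (Z j)).
  { intro j. pose proof (inv_succ_pos (sg j)). split.
    - intro k; apply cozero_set_lt; [apply continuous_dist_f|apply continuous_const].
    - intro k; apply zero_set_le; [apply continuous_dist_f|apply continuous_const].
    - intros k x; unfold U, Z; lra.
    - intro k; apply Hsg.
    - intro x. destruct (gs_cvg (sg j) x (inv_succ (sg j) / 2)) as [K HK]; [lra|].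
      exists K. intros k Hk. left. apply HK, Hk. }
  destruct (Sfin_gamma_selection (GammaF T) (GammaO T) U H2 (fun C HC => proj1 HC)) as [kk Hkk].
  { intros n L. apply GammaF_range_minus with (z := cap_upto Z n), GammaF_data_cap, Hd. }
  set (G := fun j => gs (sg j) (kk j)).
  set (b := fun n => map G (filter (fun j => Nat.eqb (sg j) n) (seq 0 (S n)))).
  assert (Hb : forall n g, In g (b n) -> exists j, g = G j /\ sg j = n).
  { intros n g Hg. apply in_map_iff in Hg. destruct Hg as [j [<- Hj]]. apply filter_In in Hj.
    exists j. split; auto. apply Nat.eqb_eq, Hj. }
  exists b. split; [intros n g Hg; destruct (Hb n g Hg) as [j [-> <-]]; eexists; reflexivity|].
  apply Gamma_pt_of_lists.
  - intros n g Hg. destruct (Hb n g Hg) as [j [-> _]]. apply gs_neq.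
  - intro M. exists (sg M). split; [apply Hsg_ge|]. intro E.
    assert (Hin : In (G M) (b (sg M))).
    { apply in_map, filter_In. split; [apply in_seq; pose proof (Hsg_ge M); lia|apply Nat.eqb_refl]. }
    rewrite E in Hin; destruct Hin.
  - intros x eps He. destruct (Hkk x) as [J1 HJ1]. destruct (inv_succ_small eps He) as [J2 HJ2].
    exists (sg (Nat.max J1 J2)). intros n Hn g Hg. destruct (Hb n g Hg) as [j [-> <-]].
    assert (HjJ : (Nat.max J1 J2 <= j)%nat).
    { destruct (Nat.lt_ge_cases j (Nat.max J1 J2)) as [H|H]; auto. specialize (Hinc _ _ H). lia. }
    eapply Rlt_le_trans; [apply (HJ1 j ltac:(lia))|].
    left. eapply Rle_lt_trans; [apply inv_succ_antitone, Hsg_ge|]. apply HJ2; lia.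
Qed.

End GammaFToCp.

Lemma Sfin_pt_of_Sfin_GammaF {X : Type} (T : Topology X) :
  Sfin (GammaF T) (GammaO T) -> forall f : CX T, Sfin (Gamma_pt (Cp T) f) (Gamma_pt (Cp T) f).
Proof.
  intros H2 f s Hs.
  destruct (choice _ (fun n => Gamma_pt_extract_seq T f (s n) (Hs n))) as [gs Hgs].
  assert (Hb : exists b : nat -> list (CX T), (forall n g, In g (b n) -> exists k, gs n k = g) /\
             Gamma_pt (Cp T) f (fun g => exists n, In g (b n))).
  { destruct (classic (exists M, forall n, (M <= n)%nat ->
                 exists k, forall x, Rabs (gs n k x - f x) < inv_succ n)) as [Hu|Hnu].
    - apply Sfin_pt_uniform_stages; try apply Hgs; auto.
    - apply Sfin_pt_nonuniform_stages; try apply Hgs; auto. intro M.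
      apply NNPP; intro HM. apply Hnu. exists M. intros n Hn. apply NNPP; intro Hk. apply HM.
      exists n. split; auto. intro k. apply NNPP; intro Hx. apply Hk. exists k. intro x.
      apply NNPP; intro; apply Hx; eauto. }
  destruct Hb as [b [Hb HG]]. exists b. split; auto.
  intros n g Hg. destruct (Hb n g Hg) as [k <-]. apply Hgs.
Qed.

Theorem mainTheorem11 (X : Type) (T : Topology X) (HT : Tychonoff T) :
  ((forall f : CX T, Sfin (Gamma_pt (Cp T) f) (Gamma_pt (Cp T) f))
     <-> Sfin (GammaF T) (GammaO T)) /\
  (Sfin (GammaF T) (GammaO T)
     <-> (Sfin (GammaCl T) (GammaCl T) /\ strongly_zero_dim T)) /\
  ((Sfin (GammaCl T) (GammaCl T) /\ strongly_zero_dim T)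
     <-> S1 (GammaF T) (GammaO T)).
Proof.
  assert (H4_3 : S1 (GammaF T) (GammaO T) ->
                 Sfin (GammaCl T) (GammaCl T) /\ strongly_zero_dim T).
  { intro H4. split; [apply Sfin_clopen_of_S1_GammaF|apply strongly_zero_dim_of_S1_GammaF]; exact H4. }
  split; [split; [apply Sfin_GammaF_of_Sfin_pt|apply Sfin_pt_of_Sfin_GammaF]|].
  split; split.
  - intro H2. apply H4_3, S1_GammaF_of_Sfin, H2.
  - intros [H3 Hszd]. apply S1_Sfin, S1_GammaF_of_Sfin_clopen; assumption.
  - intros [H3 Hszd]. apply S1_GammaF_of_Sfin_clopen; assumption.
  - exact H4_3.
Qed.
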